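(* Let $L,n$ be positive integers and $B\in\mathcal M(L,n)$. Then \[\rho_N(B)=e^\star_{[L-1,L-1]}\,e^\star_{[L-2,L-1]}\cdots e^\star_{[2,L-1]}\,e^\star_{[1,L-1]}(B).\]
   Context: $\mathcal M(L,n)$ is the set of tuples $B=(B_1,\dots,B_L)$ of subsets of $[n]$, drawn with rows $1..L$ bottom to top, columns $1..n$ left to right, ball in $(r,j)$ iff $j\in B_r$. $\mathrm{cw}(B)$ scans columns left to right, each top to bottom, recording row numbers of balls. For a word $w$ and $i\ge1$, $\mathrm{Par}_i(w)$ writes ''('' for each letter $i+1$ and '')'' for each letter $i$, reading left to right, and iteratively matches a ''('' with a '')'' to its right when adjacent or separated only by matched parentheses. $e_i^\star(B)$ moves every ball of row $i+1$ whose letter in $\mathrm{cw}(B)$ is unmatched in $\mathrm{Par}_i(\mathrm{cw}(B))$ down to row $i$ in the same column. Products of operators act right to left, $e^\star_{[a,b]}=e^\star_ae^\star_{a+1}\cdots e^\star_b$ for $a\le b$, and $\rho_N(B)=e^\star_{[1,L-1]}e^\star_{[1,L-2]}\cdots e^\star_{[1,2]}e^\star_{[1,1]}(B)$. *)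

From mathcomp Require Import all_boot.
Set Implicit Arguments. Unset Strict Implicit. Unset Printing Implicit Defensive.

(* A ball configuration B in M(L,n): rows 1..L (row r is stored at index
   r-1 : 'I_L), columns 1..n (column j is stored at index j-1 : 'I_n).
   B_r is the set of columns containing a ball in row r. *)
Definition config (L n : nat) := {ffun 'I_L -> {set 'I_n}}.

(* B_r for a 1-based row number r (empty if r is not in 1..L). *)
Definition row_of L n (B : config L n) (r : nat) : {set 'I_n} :=
  if insub r.-1 is Some k then if r == 0 then set0 else B k else set0.

(* column word cw(B), each letter tagged with the column of its ball:
   columns left to right, each column read top (row L) to bottom (row 1). *)
Definition cw_tagged L n (B : config L n) : seq (nat * 'I_n) :=
  flatten [seq [seq (r, j) | r <- rev (iota 1 L) & j \in row_of B r]
          | j <- enum 'I_n].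

Definition cw L n (B : config L n) : seq nat := map fst (cw_tagged B).

(* Par_i bracketing: letter i+1 is "(", letter i is ")", read left to right;
   matching a "(" with a ")" to its right when they are adjacent or separated
   only by matched parentheses is the usual bracket matching, computed with a
   stack of currently unmatched "(".  The result is the list of columns of the
   unmatched "(" (i.e. unmatched letters i+1). *)
Fixpoint par_unmatched_open n (i : nat) (stack : seq 'I_n)
    (w : seq (nat * 'I_n)) : seq 'I_n :=
  match w with
  | [::] => stack
  | (a, j) :: w' =>
      if a == i.+1 then par_unmatched_open i (j :: stack) w'
      else if a == i then par_unmatched_open i (behead stack) w'
      else par_unmatched_open i stack w'
  end.

Definition estar L n (i : nat) (B : config L n) : config L n :=
  let U := [set j in par_unmatched_open i [::] (cw_tagged B)] in
  [ffun k : 'I_L =>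
     if k.+1 == i.+1 then B k :\: U
     else if k.+1 == i then B k :|: U
     else B k].

(* e^star_[a,b] = e_a e_{a+1} ... e_b (acting right to left, so e_b first). *)
Definition estar_int L n (a b : nat) (B : config L n) : config L n :=
  foldr (fun i C => estar i C) B (iota a (b.+1 - a)).

(* rho_N(B) = e_[1,L-1] e_[1,L-2] ... e_[1,2] e_[1,1] (B). *)
Definition rhoN L n (B : config L n) : config L n :=
  foldr (fun k C => estar_int 1 k C) B (rev (iota 1 L.-1)).

Definition rhoN' L n (B : config L n) : config L n :=
  foldr (fun a C => estar_int a L.-1 C) B (rev (iota 1 L.-1)).

From mathcomp Require Import all_boot zify.
Set Implicit Arguments. Unset Strict Implicit. Unset Printing Implicit Defensive.

(* Tag every letter of cw(B) with its column: the tagged word determines B, and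
   e^star_i acts on it letter by letter.  Reading the word from right to left,
   the unmatched letters i seen so far form a counter, and a letter i+1 is
   unmatched exactly when it meets a zero counter.  If e_i, e_{i+1}, e_i reach a
   letter with counters (p, q, r), then e_{i+1}, e_i, e_{i+1} reach it with
   counters (q + r - min(p, r), min(p, r), p + q - min(p, r)) and lower it to
   the same letter, and the counters of the next letter are again related in
   this way; so by induction along the word the e^star_i satisfy the braid
   relations, and e^star_i, e^star_j commute for |i - j| > 1.  Both sides of
   the theorem apply the e^star_i along a reduced word of the longest
   permutation of S_L, and these two words are related by braid and
   commutation moves. *)

(* [a] is the number of unmatched letters [i] to the right of the letter [c]. *)
Definition lower_letter (i a c : nat) : nat :=
  if (c == i.+1) && (a == 0) then i else c.

Definition count_step (i c a : nat) : nat :=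
  if c == i.+1 then a.-1 else if c == i then a.+1 else a.

Ltac case_innermost_if :=
  match goal with |- context [if ?b then _ else _] =>
    lazymatch b with
    | context [if _ then _ else _] => fail
    | _ => case: ifP => //
    end
  end.

Lemma braid_step i c p q r :
  let p' := q + r - minn p r in let q' := minn p r in let r' := p + q - minn p r in
  let x1 := lower_letter i p c in let x2 := lower_letter i.+1 q x1 in
  let y1 := lower_letter i.+1 p' c in let y2 := lower_letter i q' y1 in
  let u := count_step i c p in let v := count_step i.+1 x1 q in
  let w := count_step i x2 r in
  [/\ lower_letter i r x2 = lower_letter i.+1 r' y2,
      count_step i.+1 c p' = v + w - minn u w,
      count_step i y1 q' = minn u w &
      count_step i.+1 y2 r' = u + v - minn u w].
Proof.
move=> p' q' r' x1 x2 y1 y2 u v w.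
rewrite {}/u {}/v {}/w {}/x2 {}/x1 {}/y2 {}/y1 /lower_letter /count_step.
have neq (a b : nat) : a < b -> ((a == b) = false) * ((b == a) = false).
  by split; lia.
have [->|c_i] := eqVneq c i; last have [->|c_i1] := eqVneq c i.+1;
  last have [->|c_i2] := eqVneq c i.+2.
all: repeat progress (rewrite /= ?eqxx ?(neq i i.+1) // ?(neq i i.+2) //
       ?(neq i.+1 i.+2) // ?(negbTE c_i) ?(negbTE c_i1) ?(negbTE c_i2);
     try case_innermost_if).
all: by split; lia.
Qed.

Lemma count_step_lower_far i j a b c : (j.+1 < i) || (i.+1 < j) ->
  count_step i (lower_letter j b c) a = count_step i c a.
Proof.
rewrite /lower_letter /count_step => far_ij.
by repeat case_innermost_if; lia.
Qed.

Lemma lower_letter_comm_far i j a b c : (j.+1 < i) || (i.+1 < j) ->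
  lower_letter i a (lower_letter j b c) = lower_letter j b (lower_letter i a c).
Proof.
rewrite /lower_letter => far_ij.
by repeat case_innermost_if; lia.
Qed.

Section TaggedWords.
Variable T : Type.
Implicit Types w : seq (nat * T).

Fixpoint nclose i w : nat :=
  if w is x :: w' then count_step i x.1 (nclose i w') else 0.

Definition lower i a (x : nat * T) : nat * T := (lower_letter i a x.1, x.2).

Fixpoint e_word i w : seq (nat * T) :=
  if w is x :: w' then lower i (nclose i w') x :: e_word i w' else [::].

Lemma e_word_braid_nclose i w :
  let p := nclose i w in
  let q := nclose i.+1 (e_word i w) in
  let r := nclose i (e_word i.+1 (e_word i w)) in
  [/\ e_word i (e_word i.+1 (e_word i w)) = e_word i.+1 (e_word i (e_word i.+1 w)),
      nclose i.+1 w = q + r - minn p r,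
      nclose i (e_word i.+1 w) = minn p r &
      nclose i.+1 (e_word i (e_word i.+1 w)) = p + q - minn p r].
Proof.
elim: w => [|[c t] w IH] //=; case: IH => -> -> -> ->; rewrite /lower /=.
by have [-> -> -> ->] := braid_step i c (nclose i w) (nclose i.+1 (e_word i w))
  (nclose i (e_word i.+1 (e_word i w))).
Qed.

Lemma e_word_braid i w :
  e_word i (e_word i.+1 (e_word i w)) = e_word i.+1 (e_word i (e_word i.+1 w)).
Proof. by case: (e_word_braid_nclose i w). Qed.

Lemma e_word_comm_nclose i j w : (j.+1 < i) || (i.+1 < j) ->
  [/\ e_word i (e_word j w) = e_word j (e_word i w),
      nclose i (e_word j w) = nclose i w & nclose j (e_word i w) = nclose j w].
Proof.
move=> far_ij; have far_ji : (i.+1 < j) || (j.+1 < i) by rewrite orbC.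
elim: w => [|[c t] w [IHe IHi IHj]] //=; rewrite /lower /=.
rewrite !count_step_lower_far // IHe IHi IHj.
by rewrite lower_letter_comm_far.
Qed.

Lemma e_word_comm i j w : i.+1 < j -> e_word i (e_word j w) = e_word j (e_word i w).
Proof.
by move=> lt_ij; have [] := @e_word_comm_nclose i j w; rewrite ?lt_ij ?orbT.
Qed.

End TaggedWords.

Section BraidWords.
Variables (X : Type) (e : nat -> X -> X).
Hypothesis e_braid : forall i x, e i (e i.+1 (e i x)) = e i.+1 (e i (e i.+1 x)).
Hypothesis e_comm : forall i j x, i.+1 < j -> e i (e j x) = e j (e i x).

Definition act (s : seq nat) (x : X) : X := foldr e x s.

Lemma act_cat s t x : act (s ++ t) x = act s (act t x).
Proof. exact: foldr_cat. Qed.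

Lemma act_cons k s x : act (k :: s) x = e k (act s x).
Proof. by []. Qed.

Lemma act_comm k s x : all (fun j => (j.+1 < k) || (k.+1 < j)) s ->
  act s (e k x) = e k (act s x).
Proof.
elim: s => [|j s IH] //= /andP[far_jk /IH ->].
by case/orP: far_jk => [/e_comm|/e_comm/esym].
Qed.

Lemma act_iota_shift a m k x : a <= k < a + m ->
  act (iota a m.+1) (e k x) = e k.+1 (act (iota a m.+1) x).
Proof.
move=> /andP[le_ak lt_k].
have -> : iota a m.+1 = iota a (k - a) ++ [:: k; k.+1] ++ iota k.+2 (a + m - k.+1).
  have -> : m.+1 = k - a + (2 + (a + m - k.+1)) by lia.
  by rewrite !iotaD subnKC // addn2.
rewrite !act_cat act_comm; last first.
  by apply/allP => j; rewrite mem_iota; lia.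
rewrite /= e_braid act_comm //.
by apply/allP => j; rewrite mem_iota; lia.
Qed.

Lemma act_iota_cat a m s x : all (fun k => a <= k < a + m) s ->
  act (iota a m.+1 ++ s) x = act (map succn s ++ iota a m.+1) x.
Proof.
elim: s x => [|k s IH] x; first by rewrite cats0.
move=> /andP[range_k /IH range_s].
by rewrite act_cat act_cons act_iota_shift // -act_cat range_s.
Qed.

Fixpoint w0_start a m : seq nat :=
  if m is m'.+1 then iota a m ++ w0_start a m' else [::].

Fixpoint w0_end a m : seq nat :=
  if m is m'.+1 then w0_end a.+1 m' ++ iota a m else [::].

Lemma map_succn_iota a m : map succn (iota a m) = iota a.+1 m.
Proof. by elim: m a => //= m IH a; rewrite IH. Qed.

Lemma map_succn_w0_start a m : map succn (w0_start a m) = w0_start a.+1 m.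
Proof. by elim: m => //= m IH; rewrite map_cat IH map_succn_iota. Qed.

Lemma w0_start_range a m : all (fun k => a <= k < a + m) (w0_start a m).
Proof.
elim: m => // m IH; rewrite all_cat; apply/andP; split.
  by apply/allP => k; rewrite mem_iota.
by apply/allP => k /(allP IH); lia.
Qed.

Lemma w0_end_range a m : all (fun k => a <= k < a + m) (w0_end a m).
Proof.
elim: m a => // m IH a; rewrite all_cat; apply/andP; split.
  by apply/allP => k /(allP (IH a.+1)); lia.
by apply/allP => k; rewrite mem_iota.
Qed.

Lemma act_w0_start_end a m x : act (w0_start a m) x = act (w0_end a m) x.
Proof.
elim: m a x => // m IH a x.
rewrite /= [RHS]act_cat -IH -act_cat -map_succn_w0_start -act_iota_cat //.
exact: w0_start_range.
Qed.

End BraidWords.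

Section Unmatched.
Variable T : eqType.
Implicit Types w : seq (nat * T).

Fixpoint unmatched_tags i w : seq T :=
  if w is x :: w' then
    if (x.1 == i.+1) && (nclose i w' == 0) then x.2 :: unmatched_tags i w'
    else unmatched_tags i w'
  else [::].

Lemma unmatched_tags_sub i w t : t \in unmatched_tags i w -> (i.+1, t) \in w.
Proof.
elim: w => [|[c t0] w IH] //=; case: ifP => [/andP[/eqP -> _]|_] /=.
  by rewrite !in_cons xpair_eqE eqxx => /orP[-> //|/IH ->]; rewrite orbT.
by rewrite in_cons => /IH ->; rewrite orbT.
Qed.

Lemma mem_e_word i w r t : uniq w ->
  ((r, t) \in e_word i w) =
  ((r, t) \in w) && ~~ ((r == i.+1) && (t \in unmatched_tags i w))
  || (r == i) && (t \in unmatched_tags i w).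
Proof.
elim: w => [|[c t0] w IH] /=; first by rewrite andbF.
case/andP => x_notin_w /IH {}IH.
rewrite !in_cons IH /lower /lower_letter /= !xpair_eqE.
case: ifP => [/andP[/eqP c_eq _]|not_lowered] /=.
  subst c; rewrite in_cons.
  have [r_eq|_] := eqVneq r i.+1; last first.
    by case: (r == i); case: (t == t0); case: ((r, t) \in w).
  subst r; rewrite (gtn_eqF (ltnSn i)) /=.
  by have [->|//] := eqVneq t t0; rewrite (negbTE x_notin_w).
have [r_c|_] := eqVneq r c; have [t_t0|_] := eqVneq t t0; rewrite //= ?andbF //.
subst r t.
have x_not_unmatched : ~~ ((c == i.+1) && (t0 \in unmatched_tags i w)).
  by apply/andP => -[/eqP c_eq /unmatched_tags_sub]; rewrite -c_eq (negbTE x_notin_w).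
by rewrite (negbTE x_not_unmatched).
Qed.

Lemma mem_e_word_inv i w z : z \in e_word i w ->
  exists2 z', z' \in w & z.2 = z'.2 /\ (z.1 = z'.1 \/ z'.1 = i.+1 /\ z.1 = i).
Proof.
elim: w => //= x w IH; rewrite in_cons => /orP[/eqP ->|/IH [z' z'_in_w z_z']].
  exists x; first by rewrite in_cons eqxx.
  by rewrite /lower /lower_letter /=; case: ifP => [/andP[/eqP]|]; auto.
by exists z' => //; rewrite in_cons z'_in_w orbT.
Qed.

End Unmatched.

Lemma par_unmatched_openE n i (stack : seq 'I_n) w :
  par_unmatched_open i stack w = rev (unmatched_tags i w) ++ drop (nclose i w) stack.
Proof.
elim: w stack => [|[c t] w IH] stack /=; first by rewrite drop0.
rewrite /count_step /=.
have [_|_] := eqVneq c i.+1.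
  rewrite IH; case: (posnP (nclose i w)) => [->|nclose_gt0] /=.
    by rewrite drop0 rev_cons cat_rcons.
  by case: (nclose i w) nclose_gt0.
by have [_|_] := eqVneq c i; rewrite IH //; case: stack.
Qed.

Section ColumnWords.
Variables L n : nat.
Implicit Types (B C : config L n) (w : seq (nat * 'I_n)).

Definition cw_lt (x y : nat * 'I_n) :=
  (x.2 < y.2) || (x.2 == y.2 :> nat) && (y.1 < x.1).

Lemma cw_lt_trans : transitive cw_lt.
Proof. by move=> y x z; rewrite /cw_lt; lia. Qed.

Lemma cw_lt_irr : irreflexive cw_lt.
Proof. by move=> x; rewrite /cw_lt; lia. Qed.

Definition word_config w : config L n :=
  [ffun k : 'I_L => [set j | (k.+1, j) \in w]].

Definition column_word w := sorted cw_lt w && all (fun x => 0 < x.1 <= L) w.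

Lemma row_ofS B (k : 'I_L) : row_of B k.+1 = B k.
Proof. by rewrite /row_of /= valK. Qed.

Lemma mem_cw_tagged B x :
  (x \in cw_tagged B) = (0 < x.1 <= L) && (x.2 \in row_of B x.1).
Proof.
apply/flatten_mapP/andP.
  move=> [j _ /mapP[r]]; rewrite mem_filter mem_rev mem_iota => /andP[j_in r_in] ->.
  by split => //=; lia.
case: x => r j /= [r_range j_in]; exists j; first by rewrite mem_enum.
by apply/mapP; exists r => //; rewrite mem_filter j_in mem_rev mem_iota; lia.
Qed.

Lemma mem_cw_taggedS B (k : 'I_L) j : ((k.+1, j) \in cw_tagged B) = (j \in B k).
Proof. by rewrite mem_cw_tagged /= row_ofS ltn_ord. Qed.

Lemma sorted_cw_tagged B : sorted cw_lt (cw_tagged B).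
Proof.
rewrite sorted_pairwise; last exact: cw_lt_trans.
have : pairwise (fun a b : 'I_n => a < b) (enum 'I_n).
  have := iota_ltn_sorted 0 n; rewrite -val_enum_ord sorted_map sorted_pairwise //.
  by move=> ? ? ?; apply: ltn_trans.
rewrite /cw_tagged; elim: (enum 'I_n) => [|j s IH] //= /andP[j_lt_s /IH {}IH].
rewrite pairwise_cat IH andbT; apply/andP; split.
  apply/allrelP => y z /mapP[r _ ->] /flatten_mapP[j' j'_in /mapP[r' _ ->]].
  by rewrite /cw_lt /= (allP j_lt_s).
rewrite -sorted_pairwise; last exact: cw_lt_trans.
rewrite sorted_map; apply: sorted_filter; first by move=> ? ? ?; rewrite /cw_lt /=; lia.
by rewrite rev_sorted; apply: sub_sorted (iota_ltn_sorted 1 L) => a b; rewrite /cw_lt /=; lia.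
Qed.

Lemma column_word_cw_tagged B : column_word (cw_tagged B).
Proof.
rewrite /column_word sorted_cw_tagged /=.
by apply/allP => x; rewrite mem_cw_tagged => /andP[].
Qed.

Lemma cw_tagged_word_config w : column_word w -> cw_tagged (word_config w) = w.
Proof.
case/andP=> sorted_w w_range.
apply: (irr_sorted_eq cw_lt_trans cw_lt_irr) => //; first exact: sorted_cw_tagged.
case=> r j; rewrite mem_cw_tagged /=.
have [r_range|r_out] := boolP (0 < r <= L); last first.
  by apply/esym/negP => /(allP w_range) /= r_range; rewrite r_range in r_out.
case: r r_range => // r /= r_lt.
by rewrite (row_ofS _ (Ordinal r_lt)) ffunE inE.
Qed.

Lemma cw_taggedK : cancel (@cw_tagged L n) word_config.
Proof.
by move=> B; apply/ffunP => k; apply/setP => j; rewrite ffunE inE mem_cw_taggedS.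
Qed.

Lemma nclose_gt0 i (j : 'I_n) w : pairwise cw_lt ((i.+1, j) :: w) ->
  (i, j) \in w -> 0 < nclose i w.
Proof.
case: w => [|[a b] t] //= /andP[/andP[ij_lt_ab _] /andP[/allP ab_lt_t _]].
rewrite in_cons => /orP[/eqP [<- _]|ij_in_t].
  by rewrite /count_step (ltn_eqF (ltnSn i)) eqxx.
by have := ab_lt_t _ ij_in_t; move: ij_lt_ab; rewrite /cw_lt /=; lia.
Qed.

Lemma pairwise_e_word i w : pairwise cw_lt w -> pairwise cw_lt (e_word i w).
Proof.
elim: w => //= -[c j] w IH /andP[x_lt_w pairwise_w]; rewrite IH // andbT.
apply/allP => -[a b] /mem_e_word_inv [[a' b'] z'_in_w /= [b_b' a_a']]; subst b'.
have := allP x_lt_w _ z'_in_w; rewrite /lower /lower_letter /cw_lt /=.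
case: ifP => [/andP[/eqP c_i1 /eqP nclose0]|_] /=; last by lia.
case/orP => [-> //|/andP[/eqP/ord_inj j_b a'_lt_c]]; subst b c; rewrite eqxx /=.
have [a'_i|] := eqVneq a' i; last by lia.
subst a'; suff: 0 < nclose i w by rewrite nclose0.
by apply: (@nclose_gt0 i j) => //=; rewrite x_lt_w.
Qed.

Lemma column_word_e_word i w : 0 < i -> column_word w -> column_word (e_word i w).
Proof.
move=> i_gt0 /andP[sorted_w w_range]; apply/andP; split.
  by move: sorted_w; rewrite !(sorted_pairwise cw_lt_trans); apply: pairwise_e_word.
apply/allP => -[a b] /mem_e_word_inv [[a' b'] z'_in_w /= [_ a_a']].
by have := allP w_range _ z'_in_w; rewrite /=; lia.
Qed.

Lemma cw_tagged_estar i C : 0 < i -> cw_tagged (estar i C) = e_word i (cw_tagged C).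
Proof.
move=> i_gt0; have cw_C := column_word_cw_tagged C.
rewrite -(cw_tagged_word_config (column_word_e_word i_gt0 cw_C)); congr cw_tagged.
have uniq_cw : uniq (cw_tagged C).
  by case/andP: cw_C => /(sorted_uniq cw_lt_trans cw_lt_irr).
apply/ffunP => k; apply/setP => j.
rewrite /estar !ffunE inE mem_e_word // mem_cw_taggedS par_unmatched_openE /= cats0.
case: ifP => [/eqP ->|_].
  by rewrite in_setD inE mem_rev (gtn_eqF (ltnSn i)) /= orbF andbC.
case: ifP => _; last by rewrite andbT orbF.
by rewrite in_setU inE mem_rev andbT.
Qed.

Lemma cw_tagged_foldr_estar C s : all (leq 1) s ->
  cw_tagged (foldr (fun i C => estar i C) C s) = act (@e_word _) s (cw_tagged C).
Proof. by elim: s => //= i s IH /andP[i_gt0 /IH <-]; rewrite cw_tagged_estar. Qed.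

End ColumnWords.

Lemma rhoN_w0_start L n (B : config L n) :
  rhoN B = foldr (fun i C => estar i C) B (w0_start 1 L.-1).
Proof.
rewrite /rhoN; elim: L.-1 => // m IH.
have -> : iota 1 m.+1 = rcons (iota 1 m) m.+1 by rewrite -cats1 -[m.+1]addn1 iotaD add1n addn1.
by rewrite rev_rcons /= IH foldr_cat /estar_int subn1.
Qed.

Lemma foldr_estar_int_end L n b a m (C : config L n) : a + m = b.+1 ->
  foldr (fun a' C => estar_int a' b C) C (rev (iota a m)) =
  foldr (fun i C => estar i C) C (w0_end a m).
Proof.
elim: m a C => // m IH a C a_m.
rewrite /= rev_cons -cats1 !foldr_cat IH; last by rewrite addSnnS.
by rewrite /= /estar_int (_ : b.+1 - a = m.+1) //; lia.
Qed.

Lemma rhoN'_w0_end L n (B : config L n) :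
  rhoN' B = foldr (fun i C => estar i C) B (w0_end 1 L.-1).
Proof. exact: foldr_estar_int_end. Qed.

Theorem lemma4p13 (L n : nat) (hL : 0 < L) (hn : 0 < n) (B : config L n) :
  rhoN B = rhoN' B.
Proof.
apply: (can_inj (@cw_taggedK L n)).
rewrite rhoN_w0_start rhoN'_w0_end !cw_tagged_foldr_estar.
- exact: act_w0_start_end (@e_word_braid _) (@e_word_comm _) _ _ _.
- by apply/allP => k /(allP (w0_end_range 1 L.-1)) /andP[].
- by apply/allP => k /(allP (w0_start_range 1 L.-1)) /andP[].
Qed.
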